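(* Let $C$ be a cycle, $\mathcal H$ a family of vertex subsets of $C$ such that $(C,\mathcal H)$ is $abab$-free, and $c:V(C)\to\{\mathbf r,\mathbf b\}$ a 2-colouring. Then there is an outerplanar graph $Q$ with vertex set $\mathbf b(V(C))=c^{-1}(\mathbf b)$ such that $Q[H\cap\mathbf b(V(C))]$ is connected for every $H\in\mathcal H$.
   Context: Let $C$ be a cycle with a fixed cyclic orientation; ''vertices $p_1,\dots,p_4$ in cyclic order'' means four distinct vertices met in this order when traversing $C$. A pair $H,H'\in\mathcal H$ is an $abab$-pair if there are vertices $a_1,b_1,a_2,b_2$ in cyclic order with $a_1,a_2\in H\setminus H'$ and $b_1,b_2\in H'\setminus H$; $(C,\mathcal H)$ is $abab$-free if there is no $abab$-pair. The 2-colouring need not be proper. A graph is outerplanar if it has a plane embedding with all vertices on the outer face. *)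

From mathcomp Require Import all_boot.
Set Implicit Arguments. Unset Strict Implicit. Unset Printing Implicit Defensive.

(* The cycle C has vertex set 'I_n; its fixed cyclic orientation is
   0 -> 1 -> ... -> n-1 -> 0. *)

Definition cyc_order4 n (p1 p2 p3 p4 : 'I_n) : bool :=
  [|| (p1 < p2 < p3) && (p3 < p4),
      (p2 < p3 < p4) && (p4 < p1),
      (p3 < p4 < p1) && (p1 < p2)
    | (p4 < p1 < p2) && (p2 < p3)].

Definition abab_pair n (H H' : {set 'I_n}) : Prop :=
  exists a1 b1 a2 b2 : 'I_n,
    [/\ cyc_order4 a1 b1 a2 b2,
        a1 \in H :\: H', a2 \in H :\: H',
        b1 \in H' :\: H & b2 \in H' :\: H].

Definition abab_free n (F : {set {set 'I_n}}) : Prop :=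
  forall H H', H \in F -> H' \in F -> ~ abab_pair H H'.

Definition simple_graph_on (T : finType) (V : {set T}) (Q : rel T) : Prop :=
  [/\ forall x y, Q x y = Q y x,
      forall x, ~~ Q x x
    & forall x y, Q x y -> (x \in V) && (y \in V)].

(* Outerplanarity: the vertices of V can be placed in a cyclic order on a circle
   (the sequence s) so that the edges, drawn as straight chords, do not cross.
   This is the standard combinatorial form of "has a plane embedding with all
   vertices on the outer face". *)
Definition outerplanar_on (T : finType) (V : {set T}) (Q : rel T) : Prop :=
  exists s : seq T,
    [/\ uniq s, s =i V &
        forall x0 (i j k l : nat), i < j -> j < k -> k < l -> l < size s ->
          ~~ (Q (nth x0 s i) (nth x0 s k) && Q (nth x0 s j) (nth x0 s l))].

Definition induced_connected (T : finType) (Q : rel T) (S : {set T}) : Prop :=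
  forall x y, x \in S -> y \in S ->
    connect [rel u v | [&& Q u v, u \in S & v \in S]] x y.

From mathcomp Require Import all_boot zify.
From Stdlib Require Import Classical Relation_Operators.
Set Implicit Arguments. Unset Strict Implicit. Unset Printing Implicit Defensive.

(* Number the blue vertices 0, ..., m-1 in the order of C, so that every hyperedge
   becomes a set of positions and abab-freeness survives.  By divide and conquer on
   intervals [a, b] we build a noncrossing graph on [a, b] containing the chord ab in
   which every hyperedge is connected.  The key point is that for b > a + 1 some k
   strictly between a and b is jumped over only by hyperedges containing both a and b;
   splitting at k and adding the chord ab keeps every hyperedge connected, through k or
   through ab.  If no such k existed, the gaps of hyperedges missing a or b would cover
   (a, b) and yield a chain of hyperedges, with crossing consecutive gaps, leading from a
   to b.  By abab-freeness one of two consecutive members inherits the other's elements on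
   one side, and shortening the chain accordingly ends with a single hyperedge containing
   both a and b, a contradiction. *)

Lemma bump_lt h i : i < h -> bump h i = i.
Proof. by move=> lt_ih; rewrite /bump leqNgt lt_ih. Qed.

Lemma bump_ge h i : h <= i -> bump h i = i.+1.
Proof. by move=> le_hi; rewrite /bump le_hi. Qed.

Lemma switch_point (P : nat -> Prop) n :
  P 0 -> ~ P n -> exists2 i, i < n & P i /\ ~ P i.+1.
Proof.
move=> P0; elim: n => [/(_ P0) //|n IH nPn].
have [Pn | nPn'] := classic (P n); first by exists n.
by have [i lt_in Pi] := IH nPn'; exists i => //; apply: ltnW.
Qed.

Definition noncrossing (G : rel nat) :=
  forall i j k l, i < j -> j < k -> k < l -> ~~ (G i k && G j l).

Definition linked (G : rel nat) (P : pred nat) :=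
  clos_refl_sym_trans nat (fun x y => [&& G x y, P x & P y] : Prop).

Lemma linked_sub (G G' : rel nat) P x y :
  subrel G G' -> linked G P x y -> linked G' P x y.
Proof.
rewrite /linked => sGG'.
elim=> [u v /and3P[Guv Pu Pv] | u | u v _ | u v w _ IHuv _ IHvw].
- by apply: rst_step; rewrite /= Pu Pv (sGG' _ _ Guv).
- exact: rst_refl.
- exact: rst_sym.
- exact: rst_trans IHuv IHvw.
Qed.

Lemma linked_connect (T : finType) (f : nat -> T) (e : rel T) (G : rel nat)
    (P : pred nat) x y :
  symmetric e -> (forall u v, G u v -> P u -> P v -> e (f u) (f v)) ->
  linked G P x y -> connect e (f x) (f y).
Proof.
move=> sym_e Ge; elim=> [u v /and3P[] | u | u v _ | u v w _ IHuv _ IHvw].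
- by move=> Guv Pu Pv; apply: connect1; apply: Ge.
- exact: connect0.
- by rewrite (sym_connect_sym sym_e).
- exact: connect_trans IHuv IHvw.
Qed.

Section AbabFreeLine.

Variables (I : Type) (E : I -> pred nat).

Definition abab_free_line : Prop :=
  forall u v z x y w, z < x -> x < y -> y < w ->
    E u z -> ~~ E v z -> E v x -> ~~ E u x ->
    E u y -> ~~ E v y -> E v w -> ~~ E u w -> False.

Hypothesis E_abab : abab_free_line.

Lemma abab_free_inherit u v x y : x < y ->
  E v x -> ~~ E u x -> E u y -> ~~ E v y ->
  (forall z, z < x -> E u z -> E v z) \/ (forall w, y < w -> E v w -> E u w).
Proof.
move=> xy vx ux uy vy; apply: NNPP => /not_or_and[noL noR].
apply: noL => z zx uz; apply: contraT => vz.
exfalso; apply: noR => w yw vw; apply: contraT => uw.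
by case: (E_abab zx xy yw uz vz vx ux uy vy vw uw).
Qed.

Definition gap u p q :=
  [/\ p < q, E u p, E u q & forall z, p < z < q -> ~~ E u z].

Lemma gap_around u z k w : z < k -> k < w -> E u z -> E u w -> ~~ E u k ->
  exists p q, [/\ z <= p < k, k < q <= w & gap u p q].
Proof.
move=> zk kw uz uw uk.
have exl : exists i, (z <= i < k) && E u i by exists z; rewrite leqnn zk.
have exr : exists i, (k < i) && E u i by exists w; rewrite kw.
have ubl i : (z <= i < k) && E u i -> i <= k by case/andP=> /andP[_ /ltnW].
case: (ex_maxnP exl ubl) => p /andP[/andP[zp pk] up] pmax.
case: (ex_minnP exr) => q /andP[kq uq] qmin.
exists p, q; split; rewrite ?zp ?pk ?kq ?qmin ?kw //; split=> //; first lia.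
move=> i /andP[pi iq]; apply: contraTN iq => ui; rewrite -leqNgt.
have [ik | ki | eq_ik] := ltngtP i k; last by rewrite -eq_ik ui in uk.
  have: i <= p by apply: pmax; rewrite ui ik (leq_trans zp (ltnW pi)).
  lia.
by apply: qmin; rewrite ki.
Qed.

Definition cross_link (A : nat -> I) (p q : nat -> nat) i :=
  [/\ p i < p i.+1 < q i, q i < q i.+1,
      E (A i.+1) (p i.+1) && ~~ E (A i) (p i.+1) &
      E (A i) (q i) && ~~ E (A i.+1) (q i)].

Definition cross_chain t A p q := forall i, i < t -> cross_link A p q i.

Definition left_inherit (A : nat -> I) (p : nat -> nat) i :=
  forall z, z < p i.+1 -> E (A i) z -> E (A i.+1) z.

Definition right_inherit (A : nat -> I) (q : nat -> nat) i :=
  forall z, q i < z -> E (A i.+1) z -> E (A i) z.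

Lemma cross_link_inherit A p q i :
  cross_link A p q i -> left_inherit A p i \/ right_inherit A q i.
Proof. by case=> /andP[_ ?] _ /andP[? ?] /andP[? ?]; apply: abab_free_inherit. Qed.

(* The middle set of a right-then-left pattern can be deleted: [A j] and [A j.+2] are then
   linked through [p j.+1] and [q j.+1]. *)
Lemma cross_chain_merge t A p q j : cross_chain t.+1 A p q -> j < t ->
  right_inherit A q j -> left_inherit A p j.+1 ->
  cross_chain t (A \o bump j.+1) (p \o bump j.+2) (q \o bump j).
Proof.
move=> ch jt Rj Lj1 i it; rewrite /cross_link /=.
have [lt_ij | lt_ji | ->] := ltngtP i j.
- have [lt_i1j | ge_i1j] := ltnP i.+1 j.
    by rewrite !bump_lt; [apply: ch; lia | lia..].
  have eq_j : j = i.+1 by lia.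
  subst j; rewrite [bump i.+1 i.+1]bump_ge ?bump_lt; [ | lia..].
  have [[? ? ? ?] [_ ? _ _]] := (ch i (ltnW it), ch i.+1 (ltnW jt)).
  by split=> //; lia.
- have [lt_j1i | ge_j1i] := ltnP j.+1 i.
    by rewrite !bump_ge; [apply: ch; lia | lia..].
  have eq_i : i = j.+1 by lia.
  subst i; rewrite [bump j.+2 j.+1]bump_lt ?bump_ge; [ | lia..].
  have [[/andP[? _] _ _ _] [/andP[? ?] ? ? ?]] := (ch j.+1 (ltnW it), ch j.+2 it).
  by split=> //; apply/andP; split; lia.
rewrite [bump j.+1 j]bump_lt 2?[bump j.+2 _]bump_lt ?bump_ge; [ | lia..].
have [/andP[? p1q] qq /andP[Ep1 ->] _] := ch j (ltnW jt).
have [/andP[p12 ?] ? _ /andP[Eq1 ->]] := ch j.+1 jt.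
by rewrite (Lj1 _ p12 Ep1) (Rj _ qq Eq1); split=> //; apply/andP; split; lia.
Qed.

Section Interval.

Variables a b : nat.

Lemma cross_chain_common t A p q :
  cross_chain t A p q -> a <= p 0 -> q t <= b -> E (A 0) a -> E (A t) b ->
  exists2 i, i <= t & E (A i) a && E (A i) b.
Proof.
elim: t A p q => [|t IH] A p q ch ap0 qb Ea Eb; first by exists 0; rewrite ?Ea.
have inherit i : i <= t -> left_inherit A p i \/ right_inherit A q i.
  by move=> it; apply/cross_link_inherit/ch.
have [L0 | notL0] := classic (left_inherit A p 0).
  have [/andP[p01 _] _ _ _] := ch 0 isT.
  have [||i it Eab] := IH (A \o succn) (p \o succn) (q \o succn)
    (fun i => ch i.+1) _ qb _ Eb; last by exists i.+1.
  - by rewrite /=; lia.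
  - by apply: L0 Ea; lia.
have [Rt | notRt] := classic (right_inherit A q t).
  have [_ qt _ _] := ch t (ltnSn t).
  have [||i it Eab] := IH A p q (fun i it => ch i (ltnW it)) ap0 _ Ea.
  - lia.
  - by apply: Rt Eb; lia.
  by exists i => //; apply: ltnW.
(* Otherwise some right-inheriting link is followed by a left-inheriting one. *)
have R0 : right_inherit A q 0 by case: (inherit 0 isT).
have [j jt [Rj notRj1]] := switch_point R0 notRt.
have Lj1 : left_inherit A p j.+1 by case: (inherit j.+1 jt).
have [||i it Eab] := IH _ _ _ (cross_chain_merge ch jt Rj Lj1) ap0 _ Ea.
- by rewrite /= bump_ge // ltnW.
- by rewrite /= bump_ge.
by exists (bump j.+1 i) => //; rewrite /bump; lia.
Qed.

Definition blocking_gap u p q :=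
  [/\ gap u p q, a <= p, q <= b & ~~ (E u a && E u b)].

Definition gap_chain t A p q :=
  (forall i, i <= t -> blocking_gap (A i) (p i) (q i)) /\
  (forall i, i < t -> p i < p i.+1 < q i /\ q i < q i.+1).

Lemma gap_chain_cross t A p q : gap_chain t A p q -> cross_chain t A p q.
Proof.
case=> gaps ord i it; have [/andP[pp pq] qq] := ord i it.
have [[_ _ Eq inq] _ _ _] := gaps i (ltnW it).
have [[_ Ep _ inp] _ _ _] := gaps i.+1 it.
have Np : ~~ E (A i) (p i.+1) by apply: inq; rewrite pp pq.
have Nq : ~~ E (A i.+1) (q i) by apply: inp; rewrite pq qq.
by split; rewrite ?pp ?pq ?Ep ?Eq ?Np ?Nq.
Qed.

Lemma gap_chain_single u pu qu :
  blocking_gap u pu qu -> gap_chain 0 (fun=> u) (fun=> pu) (fun=> qu).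
Proof. by split=> // i; rewrite leqn0 => /eqP ->. Qed.

Lemma gap_chain_append t A p q u pu qu :
  gap_chain t A p q -> blocking_gap u pu qu -> p 0 < pu < q t -> q t < qu ->
  exists s A' p' q', [/\ gap_chain s A' p' q', p' 0 = p 0 & q' s = qu].
Proof.
move=> [gaps ord] gap_u /andP[p0u uqt] qtu.
have qmax : {in [pred i | i <= t] &, {homo q : i j / i <= j}}.
  apply: (homo_leq_in leqnn leq_trans) => [i j + + k|i _]; rewrite !inE; first lia.
  by move=> it; have [_ /ltnW] := ord i it.
have exj : exists i, (i <= t) && (p i < pu) by exists 0.
have ubj i : (i <= t) && (p i < pu) -> i <= t by case/andP.
case: (ex_maxnP exj ubj) => j /andP[jt pju] jmax.
exists j.+1, (fun i => if i <= j then A i else u),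
  (fun i => if i <= j then p i else pu), (fun i => if i <= j then q i else qu).
split=> //=; last by rewrite ltnn.
split=> i; rewrite ?ltnS => ij.
  by have [le_ij | _] := leqP i j; [apply/gaps/(leq_trans le_ij) | ].
rewrite ij; have [lt_ij | ge_ij] := ltnP i j; first by apply: ord; lia.
have {ij ge_ij} -> : i = j by lia.
rewrite pju (leq_ltn_trans (qmax _ _ jt (leqnn t) jt) qtu); split=> //.
have [lt_jt | ge_jt] := ltnP j t; last by have -> : j = t by lia.
have [/andP[_ pq] _] := ord j lt_jt.
have pu_le : pu <= p j.+1.
  by rewrite leqNgt; apply/negP => lt; have := jmax j.+1; rewrite lt_jt lt => /(_ isT); lia.
lia.
Qed.

Section Cover.

Hypothesis ab : a.+1 < b.
Hypothesis cover :
  forall k, a < k -> k < b -> exists u p q, blocking_gap u p q /\ p < k < q.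

Lemma gap_chain_reach m : a < m -> m <= b ->
  exists t A p q, [/\ gap_chain t A p q, p 0 = a & m <= q t].
Proof.
elim: m => [|m IH am mb]; first by rewrite ltn0.
have single u pu qu : blocking_gap u pu qu -> pu <= a -> m < qu ->
    exists t A p q, [/\ gap_chain t A p q, p 0 = a & m < q t].
  move=> bg pa mq; exists 0, (fun=> u), (fun=> pu), (fun=> qu).
  by have [_ ap _ _] := bg; split; [exact: gap_chain_single | lia | ].
have [le_ma | lt_am] := leqP m a.
  have [u [pu [qu [bg /andP[pk kq]]]]] := cover (ltnSn a) ab.
  by apply: (single _ _ _ bg); lia.
have [t [A [p [q [ch p0 mq]]]]] := IH lt_am (ltnW mb).
have [lt_mq | ge_mq] := ltnP m (q t); first by exists t, A, p, q.
have [u [pu [qu [bg /andP[pm mqu]]]]] := cover lt_am mb.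
have [le_pa | lt_ap] := leqP pu a; first exact: (single _ _ _ bg).
have [||s [A' [p' [q' [ch' p'0 q's]]]]] := gap_chain_append ch bg _ _.
- by rewrite p0 lt_ap; lia.
- lia.
by exists s, A', p', q'; rewrite p'0 p0 q's.
Qed.

End Cover.

Definition separates k := forall u, ~~ E u k ->
  (exists2 z, a <= z < k & E u z) -> (exists2 z, k < z <= b & E u z) ->
  E u a && E u b.

Lemma exists_separating : a.+1 < b -> exists2 k, a < k < b & separates k.
Proof.
move=> ab; apply: NNPP => nosep.
have cover k : a < k -> k < b -> exists u p q, blocking_gap u p q /\ p < k < q.
  move=> ak kb; apply: NNPP => nocov; apply: nosep; exists k; first by rewrite ak.
  move=> u uk [z /andP[az zk] Ez] [w /andP[kw wb] Ew]; apply: contraT => nab.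
  have [p [q [/andP[zp pk] /andP[kq qw] g]]] := gap_around zk kw Ez Ew uk.
  by case: nocov; exists u, p, q; split; [split=> //; lia | rewrite pk].
have [t [A [p [q [[gaps ord] p0 bq]]]]] :=
  gap_chain_reach ab cover (ltnW ab) (leqnn b).
have [[[_ Ea _ _] _ _ _] [[_ _ Eb _] _ qb _]] := (gaps 0 isT, gaps t (leqnn t)).
have qt : q t = b by apply/eqP; rewrite eqn_leq qb bq.
rewrite p0 in Ea; rewrite qt in Eb.
have [i it] :=
  cross_chain_common (gap_chain_cross (conj gaps ord)) (eq_leq (esym p0)) qb Ea Eb.
by have [_ _ _ /negP] := gaps i it.
Qed.

End Interval.

(* Edges are oriented upwards; [position_graph] below symmetrises them. *)
Definition outerplanar_support (G : rel nat) a b :=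
  [/\ forall u v, G u v -> [&& a <= u, u < v & v <= b],
      noncrossing G &
      forall h x y, a <= x <= b -> a <= y <= b -> E h x -> E h y ->
        linked G (E h) x y].

Lemma outerplanar_support_base a b :
  b <= a.+1 -> exists G, outerplanar_support G a b.
Proof.
move=> ba; exists [rel u v | [&& u == a, v == b & a < b]]; split.
- by move=> u v /and3P[/eqP-> /eqP-> ab]; rewrite !leqnn ab.
- move=> i j k l ij jk kl; apply/negP.
  by case/andP=> /and3P[/eqP ia _ _] /and3P[/eqP ja _ _]; lia.
move=> h x y /andP[ax xb] /andP[ay yb] Ex Ey.
have [xy | yx | ->] := ltngtP x y; last exact: rst_refl.
  have [ex ey] : x = a /\ y = b by lia.
  by apply: rst_step; rewrite /= Ex Ey ex ey !eqxx; lia.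
have [ey ex] : y = a /\ x = b by lia.
by apply/rst_sym/rst_step; rewrite /= Ex Ey ex ey !eqxx; lia.
Qed.

Lemma outerplanar_support_glue a k b G1 G2 :
  a < k -> k < b -> separates a b k ->
  outerplanar_support G1 a k -> outerplanar_support G2 k b ->
  outerplanar_support [rel u v | [|| G1 u v, G2 u v | (u == a) && (v == b)]] a b.
Proof.
move=> ak kb sep [rng1 nc1 link1] [rng2 nc2 link2]; split.
- move=> u v /or3P[/rng1/and3P[? ? ?] | /rng2/and3P[? ? ?] | /andP[/eqP-> /eqP->]];
    by apply/and3P; split; lia.
- move=> i j l m ij jl lm; apply/negP.
  case/andP=> /or3P[/[dup] e1 /rng1/and3P[? ? ?] | /[dup] e1 /rng2/and3P[? ? ?]
                    | /andP[/eqP ? /eqP ?]]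
              /or3P[/[dup] e2 /rng1/and3P[? ? ?] | /[dup] e2 /rng2/and3P[? ? ?]
                    | /andP[/eqP ? /eqP ?]]; try lia.
  + by case/negP: (nc1 _ _ _ _ ij jl lm); rewrite e1 e2.
  + by case/negP: (nc2 _ _ _ _ ij jl lm); rewrite e1 e2.
set G := SimplRel _; move=> h x y.
have L1 x' y' : a <= x' -> x' <= k -> a <= y' -> y' <= k -> E h x' -> E h y' ->
    linked G (E h) x' y'.
  move=> ax' x'k ay' y'k Ex' Ey'; apply: linked_sub (link1 _ _ _ _ _ Ex' Ey').
  - by move=> u v /= ->.
  - by rewrite ax'.
  - by rewrite ay'.
have L2 x' y' : k <= x' -> x' <= b -> k <= y' -> y' <= b -> E h x' -> E h y' ->
    linked G (E h) x' y'.
  move=> kx' x'b ky' y'b Ex' Ey'; apply: linked_sub (link2 _ _ _ _ _ Ex' Ey').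
  - by move=> u v /= ->; rewrite orbT.
  - by rewrite kx'.
  - by rewrite ky'.
wlog le_xy : x y / x <= y.
  move=> W hx hy Ex Ey; have [le_xy | /ltnW le_yx] := leqP x y; first exact: W.
  by apply: rst_sym; apply: W.
move=> /andP[ax xb] /andP[ay yb] Ex Ey.
have [yk | ky] := leqP y k; first by apply: L1 => //; lia.
have [kx | xk] := leqP k x; first by apply: L2 => //; lia.
have [Ek | nEk] := boolP (E h k).
  by apply: (rst_trans _ _ _ k); [apply: L1 | apply: L2] => //; lia.
have /andP[Ea Eb] : E h a && E h b.
  by apply: sep nEk _ _; [exists x | exists y]; rewrite // ?ax ?xk ?ky ?yb.
apply: (rst_trans _ _ _ a); first by apply: L1 => //; lia.
apply: (rst_trans _ _ _ b); last by apply: L2 => //; lia.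
by apply: rst_step; rewrite /= Ea Eb !eqxx !orbT.
Qed.

Lemma outerplanar_support_exists a b : exists G, outerplanar_support G a b.
Proof.
have [N] := ubnP (b - a); elim: N a b => // N IH a b lt_ba.
have [ba | ab] := leqP b a.+1; first exact: outerplanar_support_base.
have [k /andP[ak kb] sep] := exists_separating ab.
have [|G1 supp1] := IH a k; first lia.
have [|G2 supp2] := IH k b; first lia.
by eexists; apply: outerplanar_support_glue supp1 supp2.
Qed.

End AbabFreeLine.

Section PositionGraph.

Variables (T : finType) (s : seq T) (G : rel nat).
Hypotheses (s_uniq : uniq s) (G_lt : forall u v, G u v -> u < v).

Definition position_graph : rel T :=
  [rel x y | [&& x \in s, y \in s &
               G (index x s) (index y s) || G (index y s) (index x s)]].

Lemma position_graph_sym : symmetric position_graph.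
Proof. by move=> x y; rewrite /position_graph /= andbCA orbC. Qed.

Lemma position_graph_nth x0 i j : i < size s -> j < size s ->
  position_graph (nth x0 s i) (nth x0 s j) = G i j || G j i.
Proof. by move=> ? ?; rewrite /position_graph /= !mem_nth // !index_uniq. Qed.

Lemma position_graph_simple : simple_graph_on [set x | x \in s] position_graph.
Proof.
split; first exact: position_graph_sym.
- by move=> x; apply/and3P => -[_ _]; rewrite orbb => /G_lt; rewrite ltnn.
- by move=> x y /and3P[xs ys _]; rewrite !inE xs ys.
Qed.

Lemma position_graph_outerplanar :
  noncrossing G -> outerplanar_on [set x | x \in s] position_graph.
Proof.
move=> ncG; exists s; split=> // [x | x0 i j k l ij jk kl ls]; first by rewrite inE.
have Gki : G k i = false by apply/negP => /G_lt; lia.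
have Glj : G l j = false by apply/negP => /G_lt; lia.
rewrite !position_graph_nth ?Gki ?Glj ?orbF; try lia.
exact: ncG.
Qed.

Lemma position_graph_connected x0 (S : {set T}) :
  (forall i j, i < size s -> j < size s -> nth x0 s i \in S -> nth x0 s j \in S ->
     linked G [pred k | (k < size s) && (nth x0 s k \in S)] i j) ->
  induced_connected position_graph (S :&: [set x | x \in s]).
Proof.
move=> linkS x y; rewrite !inE => /andP[xS xs] /andP[yS ys].
rewrite -(nth_index x0 xs) -(nth_index x0 ys).
apply: linked_connect (linkS _ _ _ _ _ _); rewrite ?index_mem ?nth_index //.
  by move=> u v; rewrite /= position_graph_sym; congr (_ && _); apply: andbC.
move=> i j Gij /andP[lt_is iS] /andP[lt_js jS].
by rewrite /= position_graph_nth // Gij !inE iS jS !mem_nth.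
Qed.

End PositionGraph.

Lemma abab_free_positions n (F : {set {set 'I_n}}) (s : seq 'I_n) x0 :
  sorted (relpre val ltn) s -> abab_free F ->
  abab_free_line
    (fun (h : {H | H \in F}) i => (i < size s) && (nth x0 s i \in val h)).
Proof.
move=> s_sorted hab u v z x y w zx xy yw.
move=> /andP[zs uz] + /andP[xs vx] + /andP[ys uy] + /andP[ws vw].
rewrite zs xs ys ws /= => vz ux vy uw.
have lt_nth i j : i < j -> j < size s -> val (nth x0 s i) < val (nth x0 s j).
  move=> ij js; apply: (sorted_ltn_nth (relpre_trans ltn_trans)) => //.
  by rewrite inE (ltn_trans ij).
apply: (hab _ _ (valP u) (valP v)).
exists (nth x0 s z), (nth x0 s x), (nth x0 s y), (nth x0 s w).
split; rewrite ?inE ?uz ?vz ?uy ?vy ?vx ?ux ?vw ?uw //.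
by rewrite /cyc_order4 (lt_nth z x) ?(lt_nth x y) ?(lt_nth y w).
Qed.

Theorem mainTheorem16 (n : nat) (Hn : 3 <= n) (F : {set {set 'I_n}})
  (c : 'I_n -> bool) :
  abab_free F ->
  exists Q : rel 'I_n,
    [/\ simple_graph_on [set x | c x] Q,
        outerplanar_on [set x | c x] Q &
        forall H, H \in F -> induced_connected Q (H :&: [set x | c x])].
Proof.
move=> hab; pose x0 : 'I_n := Ordinal (ltnW (ltnW Hn)).
pose s := [seq x <- enum 'I_n | c x].
have s_uniq : uniq s by rewrite filter_uniq ?enum_uniq.
have s_sorted : sorted (relpre val ltn) s.
  apply: sorted_filter; first exact: relpre_trans ltn_trans.
  by rewrite -sorted_map val_enum_ord iota_ltn_sorted.
have -> : [set x | c x] = [set x | x \in s].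
  by apply/setP => x; rewrite !inE mem_filter mem_enum andbT.
have E_abab := abab_free_positions (x0 := x0) s_sorted hab.
have [G [G_range ncG linkG]] := outerplanar_support_exists E_abab 0 (size s).-1.
have G_lt u v : G u v -> u < v by case/G_range/and3P.
exists (position_graph s G); split.
- exact: position_graph_simple.
- exact: position_graph_outerplanar.
move=> H HF; apply: (position_graph_connected (x0 := x0) s_uniq).
move=> i j lt_is lt_js iH jH.
have le_pred k : k < size s -> k <= (size s).-1.
  by move=> ks; rewrite -ltnS (ltn_predK ks).
by apply: (linkG (exist _ H HF)); rewrite /= ?le_pred ?lt_is ?lt_js.
Qed.
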